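(* Let $\mathcal{R}=(\mathcal{X},(\mathcal{M},\mathcal{I}))$ be a reflexive graph category with isomorphisms that has terminal objects stable under face maps and degeneracies. Then for each natural number $n$, the category $\mathcal{M}^n\to\mathcal{M}$ has a terminal object.
   Context: Fix a locally small category $\mathcal{C}$ with finite products; all categories, functors and natural transformations below are internal to $\mathcal{C}$ (objects of objects $C_0$, of morphisms $C_1$, source/target $\mathsf{s}_C,\mathsf{t}_C$, identities $\mathsf{id}_C$, composition $\circ_C$ on generalized morphisms $J\to C_1$, object/morphism parts $F_0,F_1$ of functors). A reflexive graph category $\mathcal{X}$ consists of internal categories $\mathcal{X}(0),\mathcal{X}(1)$, two distinct internal functors $\mathcal{X}(\mathbf{f}_\top),\mathcal{X}(\mathbf{f}_\bot):\mathcal{X}(1)\to\mathcal{X}(0)$ (face maps) and an internal functor $\mathcal{X}(\mathbf{d}):\mathcal{X}(0)\to\mathcal{X}(1)$ (degeneracy) with $\mathcal{X}(\mathbf{f}_\star)\circ\mathcal{X}(\mathbf{d})=\mathsf{id}$; $\mathcal{X}^n$ is the componentwise product. A reflexive graph functor $\mathcal{F}:\mathcal{X}\to\mathcal{Y}$ is a pair of internal functors $\mathcal{F}(l):\mathcal{X}(l)\to\mathcal{Y}(l)$; face map-preserving: $\mathcal{Y}(\mathbf{f}_\star)\circ\mathcal{F}(1)=\mathcal{F}(0)\circ\mathcal{X}(\mathbf{f}_\star)$; degeneracy-preserving: equipped with an internal natural isomorphism $\varepsilon_\mathcal{F}:\mathcal{Y}(\mathbf{d})\circ\mathcal{F}(0)\to\mathcal{F}(1)\circ\mathcal{X}(\mathbf{d})$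 with $\mathcal{Y}(\mathbf{f}_\star)_1\circ\varepsilon_\mathcal{F}=\mathsf{id}_{\mathcal{Y}(0)}\circ\mathcal{F}(0)_0$. Reflexive graph natural transformations $\eta:\mathcal{F}\to\mathcal{G}$: pairs of internal natural transformations $\eta(l):\mathcal{F}(l)\to\mathcal{G}(l)$; face map-preserving: $\mathcal{Y}(\mathbf{f}_\star)_1\circ\eta(1)=\eta(0)\circ\mathcal{X}(\mathbf{f}_\star)_0$; degeneracy-preserving: $(\eta(1)\circ\mathcal{X}(\mathbf{d})_0)\circ_{\mathcal{Y}(1)}\varepsilon_\mathcal{F}=\varepsilon_\mathcal{G}\circ_{\mathcal{Y}(1)}(\mathcal{Y}(\mathbf{d})_1\circ\eta(0))$. Composition $(\mathcal{G}\circ\mathcal{F})(l)=\mathcal{G}(l)\circ\mathcal{F}(l)$, $\varepsilon_{\mathcal{G}\circ\mathcal{F}}=(\mathcal{G}(1)_1\circ\varepsilon_\mathcal{F})\circ(\varepsilon_\mathcal{G}\circ\mathcal{F}(0)_0)$. A reflexive graph category with isomorphisms $\mathcal{R}=(\mathcal{X},(\mathcal{M},\mathcal{I}))$: reflexive graph categories $\mathcal{X},\mathcal{M}$ and a reflexive graph functor $\mathcal{I}:\mathcal{M}\to\mathcal{X}$ with $\mathcal{I}(l)_0$ iso, $\mathcal{I}(l)_1$ monic, $\mathcal{I}(0)\circ\mathcal{M}(\mathbf{f}_\star)=\mathcal{X}(\mathbf{f}_\star)\circ\mathcal{I}(1)$, $\mathcal{I}(1)\circ\mathcal{M}(\mathbf{d})=\mathcal{X}(\mathbf{d})\circ\mathcal{I}(0)$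 (so $\varepsilon_\mathcal{I}$ is an identity), and every morphism of $\mathcal{M}(l)$ an isomorphism; $\mathcal{M}(l)$ is regarded as a wide subcategory of $\mathcal{X}(l)$ and a morphism of $\mathcal{X}(l)$ ''lies in $\mathcal{M}(l)$'' if it is in the image of $\mathcal{I}(l)_1$. The category $\mathcal{M}^n\to\mathcal{M}$ has as objects the face map- and degeneracy-preserving reflexive graph functors $\mathcal{M}^n\to\mathcal{M}$ and as morphisms $\mathcal{F}\to\mathcal{G}$ the face map- and degeneracy-preserving reflexive graph natural transformations $\mathcal{I}\circ\mathcal{F}\to\mathcal{I}\circ\mathcal{G}$, with componentwise identities and composition. An internal category $C$ has a terminal object if it is equipped with $1_C:1\to C_0$ such that for every generalized object $a:J\to C_0$ there is a unique $!_C(a):J\to C_1$ with source $a$ and target $1_C\circ !_J$. $\mathcal{R}$ has terminal objects stable under face maps and degeneracies if $\mathcal{X}(0)$ and $\mathcal{X}(1)$ have terminal objects, $\mathcal{X}(\mathbf{f}_\star)_0\circ 1_{\mathcal{X}(1)}=1_{\mathcal{X}(0)}$ for both $\star$ (the canonical comparison morphism being the identity), and the canonical morphism $\eta^1_\mathcal{X}:\mathcal{X}(\mathbf{d})_0\circ 1_{\mathcal{X}(0)}\to 1_{\mathcal{X}(1)}$ in $\mathcal{X}(1)$ is an isomorphism lying in $\mathcal{M}(1)$. *)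

Record Cat := {
  ob :> Type;
  hom : ob -> ob -> Type;
  idm : forall a, hom a a;
  cmp : forall a b c, hom b c -> hom a b -> hom a c;
  cmp_idl : forall a b (f : hom a b), cmp a b b (idm b) f = f;
  cmp_idr : forall a b (f : hom a b), cmp a a b f (idm a) = f;
  cmp_assoc : forall a b c d (h : hom c d) (g : hom b c) (f : hom a b),
      cmp a c d h (cmp a b c g f) = cmp a b d (cmp b c d h g) f;
  one : ob;
  to_one : forall a, hom a one;
  to_one_uniq : forall a (f g : hom a one), f = g;
  prod : ob -> ob -> ob;
  pr1 : forall a b, hom (prod a b) a;
  pr2 : forall a b, hom (prod a b) b;
  pair : forall x a b, hom x a -> hom x b -> hom x (prod a b);
  pr1_pair : forall x a b (f : hom x a) (g : hom x b),
      cmp x (prod a b) a (pr1 a b) (pair x a b f g) = f;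
  pr2_pair : forall x a b (f : hom x a) (g : hom x b),
      cmp x (prod a b) b (pr2 a b) (pair x a b f g) = g;
  pair_eta : forall x a b (h : hom x (prod a b)),
      h = pair x a b (cmp x (prod a b) a (pr1 a b) h) (cmp x (prod a b) b (pr2 a b) h)
}.

Set Implicit Arguments.
Unset Strict Implicit.

Arguments hom {_} _ _.
Arguments idm {_} _.
Arguments cmp {_ _ _ _} _ _.
Arguments one {_}.
Arguments to_one {_} _.
Arguments prod {_} _ _.
Arguments pr1 {_ _ _}.
Arguments pr2 {_ _ _}.
Arguments pair {_ _ _ _} _ _.

Notation "g ⊙ f" := (cmp g f) (at level 40, left associativity).

Section Internal.
Variable C : Cat.

Definition monic (a b : C) (f : hom a b) : Prop :=
  forall x (u v : hom x a), f ⊙ u = f ⊙ v -> u = v.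
Definition iso (a b : C) (f : hom a b) : Prop :=
  exists g : hom b a, g ⊙ f = idm a /\ f ⊙ g = idm b.

(* Internal categories: data.  Composition is given on generalized      *)
(* morphisms J -> C1 (icomp J f g = "f after g"); its value on          *)
(* non-composable pairs is irrelevant (never constrained nor used).     *)
Record ICat := {
  c0 : C; c1 : C;
  src : hom c1 c0; tgt : hom c1 c0; iid : hom c0 c1;
  icomp : forall J : C, hom J c1 -> hom J c1 -> hom J c1 }.

Arguments icomp _ {_} _ _.

Definition composable (X : ICat) (J : C) (f g : hom J (c1 X)) : Prop :=
  src X ⊙ f = tgt X ⊙ g.

Definition is_icat (X : ICat) : Prop :=
  src X ⊙ iid X = idm (c0 X) /\ tgt X ⊙ iid X = idm (c0 X) /\
  (forall J (f g : hom J (c1 X)), composable f g ->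
      src X ⊙ icomp X f g = src X ⊙ g /\ tgt X ⊙ icomp X f g = tgt X ⊙ f) /\
  (forall J K (h : hom K J) (f g : hom J (c1 X)), composable f g ->
      icomp X (f ⊙ h) (g ⊙ h) = icomp X f g ⊙ h) /\
  (forall J (f : hom J (c1 X)), icomp X f (iid X ⊙ (src X ⊙ f)) = f) /\
  (forall J (f : hom J (c1 X)), icomp X (iid X ⊙ (tgt X ⊙ f)) f = f) /\
  (forall J (f g h : hom J (c1 X)), composable f g -> composable g h ->
      icomp X f (icomp X g h) = icomp X (icomp X f g) h).

Definition iiso (X : ICat) (J : C) (f : hom J (c1 X)) : Prop :=
  exists g : hom J (c1 X), composable f g /\ composable g f /\
    icomp X f g = iid X ⊙ (tgt X ⊙ f) /\ icomp X g f = iid X ⊙ (src X ⊙ f).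

Definition is_terminal (X : ICat) (t : hom one (c0 X)) : Prop :=
  forall J (a : hom J (c0 X)),
    exists! u : hom J (c1 X), src X ⊙ u = a /\ tgt X ⊙ u = t ⊙ to_one J.

Record IFun (X Y : ICat) := { f0 : hom (c0 X) (c0 Y); f1 : hom (c1 X) (c1 Y) }.

Definition is_ifun X Y (F : IFun X Y) : Prop :=
  src Y ⊙ f1 F = f0 F ⊙ src X /\ tgt Y ⊙ f1 F = f0 F ⊙ tgt X /\
  f1 F ⊙ iid X = iid Y ⊙ f0 F /\
  (forall J (f g : hom J (c1 X)), composable f g ->
      f1 F ⊙ icomp X f g = icomp Y (f1 F ⊙ f) (f1 F ⊙ g)).

Definition feq X Y (F G : IFun X Y) : Prop := f0 F = f0 G /\ f1 F = f1 G.

Definition fcomp X Y Z (G : IFun Y Z) (F : IFun X Y) : IFun X Z :=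
  {| f0 := f0 G ⊙ f0 F; f1 := f1 G ⊙ f1 F |}.

Definition fid X : IFun X X := {| f0 := idm (c0 X); f1 := idm (c1 X) |}.

Definition is_nt X Y (F G : IFun X Y) (a : hom (c0 X) (c1 Y)) : Prop :=
  src Y ⊙ a = f0 F /\ tgt Y ⊙ a = f0 G /\
  icomp Y (f1 G) (a ⊙ src X) = icomp Y (a ⊙ tgt X) (f1 F).

Definition is_niso X Y (F G : IFun X Y) (a : hom (c0 X) (c1 Y)) : Prop :=
  is_nt F G a /\ iiso a.

Definition iterm : ICat :=
  {| c0 := one; c1 := one; src := idm one; tgt := idm one; iid := idm one;
     icomp := fun J f g => f |}.

Definition iprod (X Y : ICat) : ICat :=
  {| c0 := prod (c0 X) (c0 Y); c1 := prod (c1 X) (c1 Y);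
     src := pair (src X ⊙ pr1) (src Y ⊙ pr2);
     tgt := pair (tgt X ⊙ pr1) (tgt Y ⊙ pr2);
     iid := pair (iid X ⊙ pr1) (iid Y ⊙ pr2);
     icomp := fun J f g =>
       pair (icomp X (pr1 ⊙ f) (pr1 ⊙ g)) (icomp Y (pr2 ⊙ f) (pr2 ⊙ g)) |}.

Definition fprod X X' Y Y' (F : IFun X Y) (G : IFun X' Y')
  : IFun (iprod X X') (iprod Y Y') :=
  @Build_IFun (iprod X X') (iprod Y Y')
    (pair (f0 F ⊙ pr1) (f0 G ⊙ pr2)) (pair (f1 F ⊙ pr1) (f1 G ⊙ pr2)).

Fixpoint ipow (X : ICat) (n : nat) : ICat :=
  match n with O => iterm | S m => iprod X (ipow X m) end.

Fixpoint fpow X Y (F : IFun X Y) (n : nat) : IFun (ipow X n) (ipow Y n) :=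
  match n with O => fid iterm | S m => fprod F (fpow F m) end.

Inductive face := fTop | fBot.

Record RG := {
  rg0 : ICat; rg1 : ICat;
  ftop : IFun rg1 rg0; fbot : IFun rg1 rg0; dgn : IFun rg0 rg1 }.

Definition fc (X : RG) (s : face) : IFun (rg1 X) (rg0 X) :=
  match s with fTop => ftop X | fBot => fbot X end.

Definition is_rg (X : RG) : Prop :=
  is_icat (rg0 X) /\ is_icat (rg1 X) /\
  is_ifun (ftop X) /\ is_ifun (fbot X) /\ is_ifun (dgn X) /\
  ~ feq (ftop X) (fbot X) /\
  (forall s, feq (fcomp (fc X s) (dgn X)) (fid (rg0 X))).

Definition rgpow (X : RG) (n : nat) : RG :=
  {| rg0 := ipow (rg0 X) n; rg1 := ipow (rg1 X) n;
     ftop := fpow (ftop X) n; fbot := fpow (fbot X) n; dgn := fpow (dgn X) n |}.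

(* reflexive graph functors: a pair of internal functors, together with
   the (degeneracy) comparison eps : Y(d) o F(0) -> F(1) o X(d) *)
Record RGFun (X Y : RG) := {
  rf0 : IFun (rg0 X) (rg0 Y); rf1 : IFun (rg1 X) (rg1 Y);
  reps : hom (c0 (rg0 X)) (c1 (rg1 Y)) }.

Definition is_rgfun X Y (F : RGFun X Y) : Prop :=
  is_ifun (rf0 F) /\ is_ifun (rf1 F).

Definition face_pres X Y (F : RGFun X Y) : Prop :=
  forall s, feq (fcomp (fc Y s) (rf1 F)) (fcomp (rf0 F) (fc X s)).

Definition deg_pres X Y (F : RGFun X Y) : Prop :=
  is_niso (fcomp (dgn Y) (rf0 F)) (fcomp (rf1 F) (dgn X)) (reps F) /\
  (forall s, f1 (fc Y s) ⊙ reps F = iid (rg0 Y) ⊙ f0 (rf0 F)).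

Definition rgcomp X Y Z (G : RGFun Y Z) (F : RGFun X Y) : RGFun X Z :=
  {| rf0 := fcomp (rf0 G) (rf0 F); rf1 := fcomp (rf1 G) (rf1 F);
     reps := icomp (rg1 Z) (f1 (rf1 G) ⊙ reps F) (reps G ⊙ f0 (rf0 F)) |}.

Definition is_rgnt X Y (F G : RGFun X Y)
    (e0 : hom (c0 (rg0 X)) (c1 (rg0 Y))) (e1 : hom (c0 (rg1 X)) (c1 (rg1 Y))) : Prop :=
  is_nt (rf0 F) (rf0 G) e0 /\ is_nt (rf1 F) (rf1 G) e1.

Definition nt_face_pres X Y (e0 : hom (c0 (rg0 X)) (c1 (rg0 Y)))
    (e1 : hom (c0 (rg1 X)) (c1 (rg1 Y))) : Prop :=
  forall s, f1 (fc Y s) ⊙ e1 = e0 ⊙ f0 (fc X s).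

Definition nt_deg_pres X Y (F G : RGFun X Y)
    (e0 : hom (c0 (rg0 X)) (c1 (rg0 Y))) (e1 : hom (c0 (rg1 X)) (c1 (rg1 Y))) : Prop :=
  icomp (rg1 Y) (e1 ⊙ f0 (dgn X)) (reps F) =
  icomp (rg1 Y) (reps G) (f1 (dgn Y) ⊙ e0).

Record RGI := { rX : RG; rM : RG; rI : RGFun rM rX }.

Definition lvlM (R : RGI) (l : bool) : ICat := if l then rg1 (rM R) else rg0 (rM R).
Definition lvlX (R : RGI) (l : bool) : ICat := if l then rg1 (rX R) else rg0 (rX R).
Definition lvlI (R : RGI) (l : bool) : IFun (lvlM R l) (lvlX R l) :=
  match l with true => rf1 (rI R) | false => rf0 (rI R) end.

Definition is_rgi (R : RGI) : Prop :=
  is_rg (rX R) /\ is_rg (rM R) /\ is_rgfun (rI R) /\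
  (forall l, iso (f0 (lvlI R l))) /\ (forall l, monic (f1 (lvlI R l))) /\
  (forall s, feq (fcomp (rf0 (rI R)) (fc (rM R) s)) (fcomp (fc (rX R) s) (rf1 (rI R)))) /\
  feq (fcomp (rf1 (rI R)) (dgn (rM R))) (fcomp (dgn (rX R)) (rf0 (rI R))) /\
  (* eps_I is the identity natural transformation *)
  reps (rI R) = iid (rg1 (rX R)) ⊙ (f0 (dgn (rX R)) ⊙ f0 (rf0 (rI R))) /\
  (forall l J (f : hom J (c1 (lvlM R l))), iiso f).

Definition lies_in_M (R : RGI) (l : bool) J (f : hom J (c1 (lvlX R l))) : Prop :=
  exists g : hom J (c1 (lvlM R l)), f1 (lvlI R l) ⊙ g = f.

Definition terminal_stable (R : RGI)
    (t0 : hom one (c0 (rg0 (rX R)))) (t1 : hom one (c0 (rg1 (rX R)))) : Prop :=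
  is_terminal t0 /\ is_terminal t1 /\
  (forall s, f0 (fc (rX R) s) ⊙ t1 = t0) /\
  (* the canonical morphism eta^1 : X(d)_0 o 1_X(0) -> 1_X(1) *)
  (forall u : hom one (c1 (rg1 (rX R))),
      src _ ⊙ u = f0 (dgn (rX R)) ⊙ t0 -> tgt _ ⊙ u = t1 ⊙ to_one one ->
      iiso u /\ lies_in_M (l := true) u).

Definition MnM_obj (R : RGI) (n : nat) (F : RGFun (rgpow (rM R) n) (rM R)) : Prop :=
  is_rgfun F /\ face_pres F /\ deg_pres F.

Definition MnM_hom (R : RGI) (n : nat) (F G : RGFun (rgpow (rM R) n) (rM R))
    (e0 : hom (c0 (rg0 (rgpow (rM R) n))) (c1 (rg0 (rX R))))
    (e1 : hom (c0 (rg1 (rgpow (rM R) n))) (c1 (rg1 (rX R)))) : Prop :=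
  is_rgnt (rgcomp (rI R) F) (rgcomp (rI R) G) e0 e1 /\
  nt_face_pres e0 e1 /\
  nt_deg_pres (rgcomp (rI R) F) (rgcomp (rI R) G) e0 e1.

(* M^n -> M has a terminal object: an object T such that every object F
   has exactly one morphism F -> T (morphisms being pairs of natural
   transformations, i.e. determined by their component pairs). *)
Definition MnM_has_terminal (R : RGI) (n : nat) : Prop :=
  exists T : RGFun (rgpow (rM R) n) (rM R), MnM_obj (R := R) (n := n) T /\
    forall F : RGFun (rgpow (rM R) n) (rM R), MnM_obj (R := R) (n := n) F ->
      exists e0 e1, MnM_hom (R := R) (n := n) F T e0 e1 /\
        forall e0' e1', MnM_hom (R := R) (n := n) F T e0' e1' ->
          e0' = e0 /\ e1' = e1.

End Internal.

Arguments terminal_stable {C} R t0 t1.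
Arguments MnM_has_terminal {C} R n.
Arguments is_rgi {C} R.

Set Implicit Arguments.
Unset Strict Implicit.

(* The terminal object of M^n -> M is the constant reflexive graph functor at the terminal
   objects 1_M(l) := I(l)^-1 (1_X(l)), whose degeneracy comparison is the preimage in M(1) of
   eta^1_X.  For an object F, the components of a morphism F -> T are forced to be the unique
   arrows I F(l)(x) -> 1_X(l); naturality, face- and degeneracy-preservation then hold because
   any two parallel arrows into a terminal object coincide.  Nothing depends on n: the source
   M^n may be replaced by any reflexive graph category. *)

Arguments cmp_assoc {c0 a b c d} h g f.
Arguments cmp_idl {c0 a b} f.
Arguments cmp_idr {c0 a b} f.
Arguments to_one_uniq {c0 a} f g.

Section Arrows.
Variable C : Cat.

Lemma to_one_cmp (a b : C) (h : hom a b) : to_one b ⊙ h = to_one a.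
Proof. apply to_one_uniq. Qed.

Lemma to_one_one : to_one (@one C) = idm one.
Proof. apply to_one_uniq. Qed.

Lemma cmp_assoc_eq (x y z w : C) (a : hom y z) (b : hom x y) (c : hom x z) (h : hom w x) :
  a ⊙ b = c -> a ⊙ (b ⊙ h) = c ⊙ h.
Proof. intros E. rewrite cmp_assoc, E. reflexivity. Qed.

Lemma iso_monic (y z : C) (f : hom y z) : iso f -> monic f.
Proof.
  intros [r [Hr _]] x u v E.
  rewrite <- (cmp_idl u), <- (cmp_idl v), <- Hr, <- !cmp_assoc, E.
  reflexivity.
Qed.

End Arrows.

Section InternalCategory.
Variables (C : Cat) (X : ICat C).
Hypothesis HX : is_icat X.

Lemma src_iid_cmp J (a : hom J (c0 X)) : src X ⊙ (iid X ⊙ a) = a.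
Proof. destruct HX as [Hs _]. rewrite cmp_assoc, Hs, cmp_idl. reflexivity. Qed.

Lemma tgt_iid_cmp J (a : hom J (c0 X)) : tgt X ⊙ (iid X ⊙ a) = a.
Proof. destruct HX as [_ [Ht _]]. rewrite cmp_assoc, Ht, cmp_idl. reflexivity. Qed.

Lemma icomp_iid_r J (f : hom J (c1 X)) (a : hom J (c0 X)) :
  src X ⊙ f = a -> icomp f (iid X ⊙ a) = f.
Proof. destruct HX as (_ & _ & _ & _ & Hr & _). intros <-. apply Hr. Qed.

Lemma icomp_iid_l J (f : hom J (c1 X)) (a : hom J (c0 X)) :
  tgt X ⊙ f = a -> icomp (iid X ⊙ a) f = f.
Proof. destruct HX as (_ & _ & _ & _ & _ & Hl & _). intros <-. apply Hl. Qed.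

Lemma icomp_ends J (f g : hom J (c1 X)) : composable f g ->
  src X ⊙ icomp f g = src X ⊙ g /\ tgt X ⊙ icomp f g = tgt X ⊙ f.
Proof. destruct HX as (_ & _ & Hc & _). apply Hc. Qed.

Variable t : hom one (c0 X).
Hypothesis Ht : is_terminal t.

Lemma terminal_arrow_exists J (a : hom J (c0 X)) :
  exists u : hom J (c1 X), src X ⊙ u = a /\ tgt X ⊙ u = t ⊙ to_one J.
Proof. destruct (Ht a) as [u [Hu _]]. exists u. exact Hu. Qed.

Lemma terminal_arrow_uniq J (u v : hom J (c1 X)) (k1 k2 : hom J one) :
  src X ⊙ u = src X ⊙ v -> tgt X ⊙ u = t ⊙ k1 -> tgt X ⊙ v = t ⊙ k2 -> u = v.
Proof.
  intros Hs Hu Hv. destruct (Ht (src X ⊙ v)) as [w [_ Hw]].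
  rewrite (to_one_uniq k1 (to_one J)) in Hu. rewrite (to_one_uniq k2 (to_one J)) in Hv.
  rewrite <- (Hw u), <- (Hw v); auto.
Qed.

End InternalCategory.

Section InternalFunctors.
Variable C : Cat.

Lemma fcomp_ifun (X Y Z : ICat C) (G : IFun Y Z) (F : IFun X Y) :
  is_ifun G -> is_ifun F -> is_ifun (fcomp G F).
Proof.
  intros (Gs & Gt & Gi & Gc) (Fs & Ft & Fi & Fc). unfold is_ifun; cbn [fcomp f0 f1].
  split; [|split; [|split]].
  - rewrite cmp_assoc, Gs, <- cmp_assoc, Fs, cmp_assoc. reflexivity.
  - rewrite cmp_assoc, Gt, <- cmp_assoc, Ft, cmp_assoc. reflexivity.
  - rewrite <- cmp_assoc, Fi, cmp_assoc, Gi, cmp_assoc. reflexivity.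
  - intros J f g Hfg.
    assert (HFfg : composable (f1 F ⊙ f) (f1 F ⊙ g)).
    { unfold composable in *. rewrite !cmp_assoc, Fs, Ft, <- !cmp_assoc, Hfg. reflexivity. }
    rewrite <- cmp_assoc, Fc, Gc, !cmp_assoc by assumption. reflexivity.
Qed.

Definition cst (X Y : ICat C) (a : hom one (c0 Y)) : IFun X Y :=
  {| f0 := a ⊙ to_one (c0 X); f1 := iid Y ⊙ (a ⊙ to_one (c1 X)) |}.
Arguments cst X Y a : clear implicits.

Lemma cst_ifun (X Y : ICat C) (a : hom one (c0 Y)) : is_icat Y -> is_ifun (cst X Y a).
Proof.
  intros HY. unfold is_ifun, cst; cbn [f0 f1].
  split; [|split; [|split]].
  - rewrite src_iid_cmp, <- cmp_assoc, to_one_cmp by exact HY. reflexivity.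
  - rewrite tgt_iid_cmp, <- cmp_assoc, to_one_cmp by exact HY. reflexivity.
  - rewrite <- !cmp_assoc, !to_one_cmp. reflexivity.
  - intros J f g _. rewrite <- !cmp_assoc, !to_one_cmp.
    symmetry. apply icomp_iid_r, src_iid_cmp; exact HY.
Qed.

Lemma fcomp_cst (X Y Z : ICat C) (F : IFun Y Z) (a : hom one (c0 Y)) :
  is_ifun F -> feq (fcomp F (cst X Y a)) (cst X Z (f0 F ⊙ a)).
Proof.
  intros (_ & _ & Fi & _). unfold feq, cst; cbn [fcomp f0 f1]. split.
  - rewrite cmp_assoc. reflexivity.
  - rewrite cmp_assoc, Fi, <- !cmp_assoc. reflexivity.
Qed.

Section IntoTerminal.
Variables (X Y : ICat C) (t : hom one (c0 Y)) (F G : IFun X Y).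
Hypotheses (HY : is_icat Y) (Ht : is_terminal t) (HG : feq G (cst X Y t)).

(* Naturality is automatic: both composites land in the terminal object. *)
Lemma is_nt_into_terminal (a : hom (c0 X) (c1 Y)) :
  is_ifun F -> src Y ⊙ a = f0 F -> tgt Y ⊙ a = t ⊙ to_one (c0 X) -> is_nt F G a.
Proof.
  destruct HG as [G0 G1]; cbn [cst f0 f1] in G0, G1.
  intros (Fs & Ft & _) Ha_src Ha_tgt.
  split; [exact Ha_src | split; [rewrite G0; exact Ha_tgt |]].
  assert (C1 : composable (f1 G) (a ⊙ src X)).
  { unfold composable. rewrite G1, src_iid_cmp, cmp_assoc, Ha_tgt, <- cmp_assoc, to_one_cmp
      by exact HY. reflexivity. }
  assert (C2 : composable (a ⊙ tgt X) (f1 F)).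
  { unfold composable. rewrite cmp_assoc, Ha_src, Ft. reflexivity. }
  destruct (icomp_ends HY C1) as [S1 T1], (icomp_ends HY C2) as [S2 T2].
  apply (terminal_arrow_uniq Ht (k1 := to_one (c1 X)) (k2 := to_one (c0 X) ⊙ tgt X)).
  - rewrite S1, S2, cmp_assoc, Ha_src, Fs. reflexivity.
  - rewrite T1, G1, tgt_iid_cmp by exact HY. reflexivity.
  - rewrite T2, cmp_assoc, Ha_tgt, cmp_assoc. reflexivity.
Qed.

Lemma is_nt_into_terminal_uniq (a b : hom (c0 X) (c1 Y)) :
  is_nt F G a -> is_nt F G b -> a = b.
Proof.
  destruct HG as [G0 _]; cbn [cst f0] in G0.
  intros [Ha_src [Ha_tgt _]] [Hb_src [Hb_tgt _]].
  rewrite G0 in Ha_tgt, Hb_tgt.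
  apply (terminal_arrow_uniq Ht (u := a) (v := b) (k1 := to_one _) (k2 := to_one _)); auto.
  rewrite Ha_src, Hb_src. reflexivity.
Qed.

End IntoTerminal.
End InternalFunctors.

Arguments cst {C} X Y a.

Section TerminalObject.
Variables (C : Cat) (R : RGI C).
Variables (t0 : hom one (c0 (rg0 (rX R)))) (t1 : hom one (c0 (rg1 (rX R)))).
Hypotheses (HR : is_rgi R) (HT : terminal_stable R t0 t1).

Local Notation X0 := (rg0 (rX R)).
Local Notation X1 := (rg1 (rX R)).
Local Notation M0 := (rg0 (rM R)).
Local Notation M1 := (rg1 (rM R)).
Local Notation I0 := (rf0 (rI R)).
Local Notation I1 := (rf1 (rI R)).
Local Notation dX := (dgn (rX R)).
Local Notation dM := (dgn (rM R)).

Lemma X0_icat : is_icat X0.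
Proof. destruct HR as ((H & _) & _). exact H. Qed.

Lemma X1_icat : is_icat X1.
Proof. destruct HR as ((_ & H & _) & _). exact H. Qed.

Lemma M0_icat : is_icat M0.
Proof. destruct HR as (_ & (H & _) & _). exact H. Qed.

Lemma M1_icat : is_icat M1.
Proof. destruct HR as (_ & (_ & H & _) & _). exact H. Qed.

Lemma X_face_ifun s : is_ifun (fc (rX R) s).
Proof. destruct HR as ((_ & _ & Ht & Hb & _) & _). destruct s; assumption. Qed.

Lemma I0_ifun : is_ifun I0.
Proof. destruct HR as (_ & _ & [H _] & _). exact H. Qed.

Lemma I1_ifun : is_ifun I1.
Proof. destruct HR as (_ & _ & [_ H] & _). exact H. Qed.

Lemma I0_monic : monic (f0 I0).
Proof. destruct HR as (_ & _ & _ & Hiso & _). apply iso_monic, (Hiso false). Qed.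

Lemma I1_monic : monic (f0 I1).
Proof. destruct HR as (_ & _ & _ & Hiso & _). apply iso_monic, (Hiso true). Qed.

Lemma I_face s :
  f0 I0 ⊙ f0 (fc (rM R) s) = f0 (fc (rX R) s) ⊙ f0 I1 /\
  f1 I0 ⊙ f1 (fc (rM R) s) = f1 (fc (rX R) s) ⊙ f1 I1.
Proof. destruct HR as (_ & _ & _ & _ & _ & H & _). apply H. Qed.

Lemma I_dgn_obj : f0 I1 ⊙ f0 dM = f0 dX ⊙ f0 I0.
Proof. destruct HR as (_ & _ & _ & _ & _ & _ & [H _] & _). exact H. Qed.

Lemma X0_terminal : is_terminal t0.
Proof. destruct HT as [H _]. exact H. Qed.

Lemma X1_terminal : is_terminal t1.
Proof. destruct HT as [_ [H _]]. exact H. Qed.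

Lemma X_face_t1 s : f0 (fc (rX R) s) ⊙ t1 = t0.
Proof. destruct HT as (_ & _ & H & _). apply H. Qed.

(* m0, m1 are 1_M(0), 1_M(1), and g is the preimage of eta^1_X in M(1). *)
Lemma terminal_lifts :
  exists m0 m1 g, f0 I0 ⊙ m0 = t0 /\ f0 I1 ⊙ m1 = t1 /\
    src X1 ⊙ (f1 I1 ⊙ g) = f0 dX ⊙ t0 /\ tgt X1 ⊙ (f1 I1 ⊙ g) = t1.
Proof.
  destruct HR as (_ & _ & _ & Hiso & _), HT as (_ & _ & _ & Heta).
  destruct (Hiso false) as [i0 [_ Hi0]], (Hiso true) as [i1 [_ Hi1]].
  destruct (terminal_arrow_exists X1_terminal (f0 dX ⊙ t0)) as [u [Hu_src Hu_tgt]].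
  rewrite to_one_one, cmp_idr in Hu_tgt.
  destruct (Heta u Hu_src) as [_ [g Hg]]; [rewrite to_one_one, cmp_idr; exact Hu_tgt |].
  pose proof (cmp_assoc_eq t0 Hi0) as Hm0. pose proof (cmp_assoc_eq t1 Hi1) as Hm1.
  rewrite cmp_idl in Hm0. rewrite cmp_idl in Hm1. subst u.
  exists (i0 ⊙ t0), (i1 ⊙ t1), g. auto.
Qed.

Variables (m0 : hom one (c0 M0)) (m1 : hom one (c0 M1)) (g : hom one (c1 M1)).
Hypotheses (Hm0 : f0 I0 ⊙ m0 = t0) (Hm1 : f0 I1 ⊙ m1 = t1).
Hypotheses (Hg_src : src X1 ⊙ (f1 I1 ⊙ g) = f0 dX ⊙ t0)
  (Hg_tgt : tgt X1 ⊙ (f1 I1 ⊙ g) = t1).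

Lemma M_face_m1 s : f0 (fc (rM R) s) ⊙ m1 = m0.
Proof.
  apply I0_monic.
  rewrite cmp_assoc, (proj1 (I_face s)), <- cmp_assoc, Hm1, Hm0. apply X_face_t1.
Qed.

Lemma src_g : src M1 ⊙ g = f0 dM ⊙ m0.
Proof.
  apply I1_monic.
  destruct I1_ifun as [Hs _].
  rewrite cmp_assoc, <- Hs, <- cmp_assoc, Hg_src, cmp_assoc, I_dgn_obj, <- cmp_assoc, Hm0.
  reflexivity.
Qed.

Lemma tgt_g : tgt M1 ⊙ g = m1.
Proof.
  apply I1_monic.
  destruct I1_ifun as [_ [Ht _]].
  rewrite cmp_assoc, <- Ht, <- cmp_assoc, Hg_tgt, Hm1. reflexivity.
Qed.

Lemma M_face_g s : f1 (fc (rM R) s) ⊙ g = iid M0 ⊙ m0.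
Proof.
  destruct HR as (_ & _ & _ & _ & Hmon & _).
  apply (Hmon false); cbn [lvlI lvlM lvlX].
  destruct I0_ifun as (_ & _ & Hi & _), (X_face_ifun s) as (Fs & Ft & _).
  rewrite cmp_assoc, (proj2 (I_face s)), <- cmp_assoc, (cmp_assoc_eq _ Hi), <- cmp_assoc, Hm0.
  apply (terminal_arrow_uniq X0_terminal (k1 := idm one) (k2 := idm one)).
  - destruct HR as ((_ & _ & _ & _ & _ & _ & Hfd) & _).
    destruct (Hfd s) as [Hfd0 _]; cbn [fcomp fid f0] in Hfd0.
    rewrite cmp_assoc, Fs, <- cmp_assoc, Hg_src, cmp_assoc, Hfd0, cmp_idl.
    rewrite src_iid_cmp by exact X0_icat. reflexivity.
  - rewrite cmp_assoc, Ft, <- cmp_assoc, Hg_tgt, X_face_t1, cmp_idr. reflexivity.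
  - rewrite tgt_iid_cmp, cmp_idr by exact X0_icat. reflexivity.
Qed.

Variable D : RG C.

Definition cst_rgfun : RGFun D (rM R) :=
  {| rf0 := cst (rg0 D) M0 m0; rf1 := cst (rg1 D) M1 m1; reps := g ⊙ to_one (c0 (rg0 D)) |}.

Lemma cst_rgfun_is_rgfun : is_rgfun cst_rgfun.
Proof. split; apply cst_ifun; [exact M0_icat | exact M1_icat]. Qed.

Lemma cst_rgfun_face_pres : face_pres cst_rgfun.
Proof.
  intros s; split; cbn [cst_rgfun rf0 rf1 fcomp cst f0 f1].
  - rewrite cmp_assoc, M_face_m1, <- cmp_assoc, to_one_cmp. reflexivity.
  - destruct HR as (_ & (_ & _ & Ht & Hb & _) & _).
    assert (Hi : f1 (fc (rM R) s) ⊙ iid M1 = iid M0 ⊙ f0 (fc (rM R) s))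
      by (destruct s; [apply Ht | apply Hb]).
    rewrite (cmp_assoc_eq _ Hi), <- !cmp_assoc, (cmp_assoc_eq _ (M_face_m1 s)), to_one_cmp.
    reflexivity.
Qed.

Lemma cst_rgfun_deg_pres : deg_pres cst_rgfun.
Proof.
  split; [split; [split; [|split] |] |]; cbn [cst_rgfun rf0 rf1 reps fcomp cst f0 f1].
  - rewrite (cmp_assoc_eq _ src_g), <- cmp_assoc. reflexivity.
  - rewrite (cmp_assoc_eq _ tgt_g), <- cmp_assoc, to_one_cmp. reflexivity.
  - destruct HR as (_ & (_ & _ & _ & _ & (_ & _ & HdM & _) & _) & _).
    rewrite <- !cmp_assoc, !to_one_cmp, (cmp_assoc_eq _ HdM), <- cmp_assoc.
    rewrite icomp_iid_l, icomp_iid_r; [reflexivity | exact M1_icat | | exact M1_icat |].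
    + rewrite (cmp_assoc_eq _ src_g), <- cmp_assoc. reflexivity.
    + apply (cmp_assoc_eq _ tgt_g).
  - destruct HR as (_ & _ & _ & _ & _ & _ & _ & _ & Hiso). exact (Hiso true _ _).
  - intros s. rewrite (cmp_assoc_eq _ (M_face_g s)), <- cmp_assoc. reflexivity.
Qed.

Lemma reps_rgcomp_I_ends (G : RGFun D (rM R)) : deg_pres G ->
  src X1 ⊙ reps (rgcomp (rI R) G) = f0 dX ⊙ (f0 I0 ⊙ f0 (rf0 G)) /\
  tgt X1 ⊙ reps (rgcomp (rI R) G) = f0 I1 ⊙ (f0 (rf1 G) ⊙ f0 (dgn D)).
Proof.
  intros [[(Hs & Ht & _) _] _]; cbn [fcomp f0] in Hs, Ht; cbn [rgcomp reps].
  destruct HR as (_ & _ & _ & _ & _ & _ & _ & Heps & _).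
  destruct I1_ifun as (I1s & I1t & _).
  assert (Hsrc : src X1 ⊙ (reps (rI R) ⊙ f0 (rf0 G)) = f0 dX ⊙ (f0 I0 ⊙ f0 (rf0 G))).
  { rewrite Heps, <- !cmp_assoc, src_iid_cmp by exact X1_icat. reflexivity. }
  assert (Hcomp : composable (f1 I1 ⊙ reps G) (reps (rI R) ⊙ f0 (rf0 G))).
  { unfold composable.
    rewrite Heps, <- !cmp_assoc, tgt_iid_cmp by exact X1_icat.
    rewrite cmp_assoc, I1s, <- cmp_assoc, Hs, cmp_assoc, I_dgn_obj, <- cmp_assoc. reflexivity. }
  destruct (icomp_ends X1_icat Hcomp) as [-> ->].
  split; [exact Hsrc |].
  rewrite cmp_assoc, I1t, <- cmp_assoc, Ht. reflexivity.
Qed.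

Section ArrowsIntoCst.
Variable F : RGFun D (rM R).
Hypotheses (HF : is_rgfun F) (HF_face : face_pres F) (HF_deg : deg_pres F).
Variables (e0 : hom (c0 (rg0 D)) (c1 X0)) (e1 : hom (c0 (rg1 D)) (c1 X1)).
Hypotheses (He0_src : src X0 ⊙ e0 = f0 I0 ⊙ f0 (rf0 F))
  (He0_tgt : tgt X0 ⊙ e0 = t0 ⊙ to_one (c0 (rg0 D)))
  (He1_src : src X1 ⊙ e1 = f0 I1 ⊙ f0 (rf1 F))
  (He1_tgt : tgt X1 ⊙ e1 = t1 ⊙ to_one (c0 (rg1 D))).

Lemma cst_rgfun_rgnt : is_rgnt (rgcomp (rI R) F) (rgcomp (rI R) cst_rgfun) e0 e1.
Proof.
  destruct HF as [HF0 HF1]. split.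
  - apply (is_nt_into_terminal X0_icat X0_terminal); [| exact (fcomp_ifun I0_ifun HF0) | ..];
      try assumption.
    rewrite <- Hm0. apply fcomp_cst, I0_ifun.
  - apply (is_nt_into_terminal X1_icat X1_terminal); [| exact (fcomp_ifun I1_ifun HF1) | ..];
      try assumption.
    rewrite <- Hm1. apply fcomp_cst, I1_ifun.
Qed.

Lemma cst_rgfun_nt_face_pres : nt_face_pres e0 e1.
Proof.
  intros s. destruct (X_face_ifun s) as (Fs & Ft & _).
  destruct (HF_face s) as [HF0 _]; cbn [fcomp f0] in HF0.
  apply (terminal_arrow_uniq X0_terminal
           (k1 := to_one (c0 (rg1 D))) (k2 := to_one (c0 (rg0 D)) ⊙ f0 (fc D s))).
  - rewrite cmp_assoc, Fs, <- cmp_assoc, He1_src, cmp_assoc, <- (proj1 (I_face s)).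
    rewrite <- cmp_assoc, HF0, cmp_assoc, (cmp_assoc _ e0 _), He0_src. reflexivity.
  - rewrite cmp_assoc, Ft, <- cmp_assoc, He1_tgt, cmp_assoc, X_face_t1. reflexivity.
  - rewrite cmp_assoc, He0_tgt, cmp_assoc. reflexivity.
Qed.

Lemma cst_rgfun_nt_deg_pres :
  nt_deg_pres (rgcomp (rI R) F) (rgcomp (rI R) cst_rgfun) e0 e1.
Proof.
  unfold nt_deg_pres.
  destruct (reps_rgcomp_I_ends HF_deg) as [HsF HtF].
  destruct (reps_rgcomp_I_ends cst_rgfun_deg_pres) as [HsT HtT].
  cbn [cst_rgfun rf0 rf1 cst f0] in HsT, HtT.
  rewrite (cmp_assoc_eq _ Hm0) in HsT.
  rewrite <- cmp_assoc, (cmp_assoc_eq _ Hm1), to_one_cmp in HtT.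
  destruct HR as ((_ & _ & _ & _ & (HdXs & HdXt & _) & _) & _).
  assert (C1 : composable (e1 ⊙ f0 (dgn D)) (reps (rgcomp (rI R) F))).
  { unfold composable. rewrite (cmp_assoc_eq _ He1_src), HtF, <- cmp_assoc. reflexivity. }
  assert (C2 : composable (reps (rgcomp (rI R) cst_rgfun)) (f1 dX ⊙ e0)).
  { unfold composable.
    rewrite HsT, (cmp_assoc (tgt X1)), HdXt, <- cmp_assoc, He0_tgt. reflexivity. }
  destruct (icomp_ends X1_icat C1) as [Hs1 Ht1], (icomp_ends X1_icat C2) as [Hs2 Ht2].
  apply (terminal_arrow_uniq X1_terminal
           (k1 := to_one (c0 (rg1 D)) ⊙ f0 (dgn D)) (k2 := to_one (c0 (rg0 D)))).
  - rewrite Hs1, Hs2, HsF, (cmp_assoc (src X1)), HdXs, <- cmp_assoc, He0_src. reflexivity.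
  - rewrite Ht1, (cmp_assoc_eq _ He1_tgt), <- cmp_assoc. reflexivity.
  - rewrite Ht2. exact HtT.
Qed.

End ArrowsIntoCst.

Lemma cst_rgfun_rgnt_uniq (F : RGFun D (rM R)) e0 e1 e0' e1' :
  is_rgnt (rgcomp (rI R) F) (rgcomp (rI R) cst_rgfun) e0 e1 ->
  is_rgnt (rgcomp (rI R) F) (rgcomp (rI R) cst_rgfun) e0' e1' -> e0 = e0' /\ e1 = e1'.
Proof.
  intros [N0 N1] [N0' N1']. split.
  - refine (is_nt_into_terminal_uniq X0_terminal _ N0 N0').
    rewrite <- Hm0. apply fcomp_cst, I0_ifun.
  - refine (is_nt_into_terminal_uniq X1_terminal _ N1 N1').
    rewrite <- Hm1. apply fcomp_cst, I1_ifun.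
Qed.

End TerminalObject.

Theorem lemma41 (C : Cat) (R : RGI C) (t0 : hom one (c0 (rg0 (rX R))))
    (t1 : hom one (c0 (rg1 (rX R)))) :
  is_rgi R -> terminal_stable R t0 t1 ->
  forall n : nat, MnM_has_terminal R n.
Proof.
  intros HR HT n.
  destruct (terminal_lifts HR HT) as (m0 & m1 & g & Hm0 & Hm1 & Hg_src & Hg_tgt).
  exists (cst_rgfun m0 m1 g (rgpow (rM R) n)). split.
  { split; [|split].
    - exact (cst_rgfun_is_rgfun HR m0 m1 g _).
    - exact (cst_rgfun_face_pres HR HT g Hm0 Hm1 _).
    - exact (cst_rgfun_deg_pres HR HT Hm0 Hm1 Hg_src Hg_tgt _). }
  intros F (HF & HF_face & HF_deg).
  destruct (terminal_arrow_exists (X0_terminal HT) (f0 (rf0 (rI R)) ⊙ f0 (rf0 F)))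
    as (e0 & He0_src & He0_tgt).
  destruct (terminal_arrow_exists (X1_terminal HT) (f0 (rf1 (rI R)) ⊙ f0 (rf1 F)))
    as (e1 & He1_src & He1_tgt).
  pose proof (cst_rgfun_rgnt HR HT g Hm0 Hm1 HF He0_src He0_tgt He1_src He1_tgt) as Hnt.
  exists e0, e1. split; [split; [exact Hnt | split] |].
  - exact (cst_rgfun_nt_face_pres HR HT HF_face He0_src He0_tgt He1_src He1_tgt).
  - exact (cst_rgfun_nt_deg_pres HR HT Hm0 Hm1 Hg_src Hg_tgt HF_deg
             He0_src He0_tgt He1_src He1_tgt).
  - intros e0' e1' [Hnt' _].
    destruct (cst_rgfun_rgnt_uniq HR HT Hm0 Hm1 Hnt' Hnt). auto.
Qed.
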